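(* Let $G$ be a connected toroidal graph (a finite simple graph embeddable in the torus) that contains no subgraph isomorphic to $C_1$ and no subgraph isomorphic to $C_2$, where $C_1$ and $C_2$ are the graphs described in the context. Then $G$ has minimum degree at most three, unless $G$ is a $2$-connected $4$-regular graph with Euler characteristic $\epsilon(G)=0$.
   Context: $C_1$ (the ''house'') is the graph on vertices $a,b,c,d,h$ with edges $ab,bc,cd,da,ah,hb$; equivalently a $4$-cycle $abcd$ together with a triangle $abh$ sharing the edge $ab$. $C_2$ is the graph on vertices $u_1,\dots,u_5,x,y$ with edges $u_1u_2,u_2u_3,u_3u_4,u_4u_5,u_5u_1$ (a $5$-cycle), $xu_5,xu_1$ and $yu_1,yu_2$; i.e. a $5$-cycle with two triangles attached on the two consecutive edges $u_5u_1$ and $u_1u_2$. ''Subgraph'' means not necessarily induced. For a connected toroidal graph $G$, $\epsilon(G)$ denotes $|V(G)|-|E(G)|+|F(G)|$ for a $2$-cell embedding of $G$ in the plane or the torus, i.e. the Euler characteristic of that surface ($2$ for the plane/sphere, $0$ for the torus); thus $\epsilon(G)=0$ means the $2$-cell embedding is in the torus. *)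

From mathcomp Require Import all_boot all_order all_fingroup all_algebra.
Set Implicit Arguments. Unset Strict Implicit. Unset Printing Implicit Defensive.

Definition simple_graph (T : finType) (e : rel T) : Prop :=
  symmetric e /\ irreflexive e.

Definition nbhd (T : finType) (e : rel T) (x : T) : {set T} := [set y | e x y].
Definition deg (T : finType) (e : rel T) (x : T) : nat := #|nbhd e x|.

Definition connected_graph (T : finType) (e : rel T) : Prop :=
  forall x y : T, connect e x y.

Definition del_vertex (T : finType) (e : rel T) (v : T) : rel T :=
  [rel a b | [&& e a b, a != v & b != v]].

Definition two_connected (T : finType) (e : rel T) : Prop :=
  2 < #|T| /\
  forall v x y : T, x != v -> y != v -> connect (del_vertex e v) x y.

Definition regular (T : finType) (e : rel T) (k : nat) : Prop :=
  forall x : T, deg e x = k.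

Definition has_subgraph (n : nat) (H : rel 'I_n) (T : finType) (e : rel T) : Prop :=
  exists f : 'I_n -> T, injective f /\ forall i j : 'I_n, H i j -> e (f i) (f j).

Definition rel_of_edges (n : nat) (l : seq (nat * nat)) : rel 'I_n :=
  fun i j => ((nat_of_ord i, nat_of_ord j) \in l) || ((nat_of_ord j, nat_of_ord i) \in l).

(* C1 (house): a=0, b=1, c=2, d=3, h=4; edges ab bc cd da ah hb *)
Definition C1 : rel 'I_5 :=
  rel_of_edges [:: (0,1); (1,2); (2,3); (3,0); (0,4); (4,1)].

(* C2: u1..u5 = 0..4, x = 5, y = 6;
   edges u1u2 u2u3 u3u4 u4u5 u5u1, xu5 xu1, yu1 yu2 *)
Definition C2 : rel 'I_7 :=
  rel_of_edges [:: (0,1); (1,2); (2,3); (3,4); (4,0); (5,4); (5,0); (6,0); (6,1)].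

(* ---- Cellular embeddings in orientable surfaces via rotation systems ----
   (Heffter-Edmonds): a rotation system assigns to each vertex x a cyclic
   permutation of its neighbourhood.  The faces of the corresponding 2-cell
   embedding are the orbits of the face-tracing map on darts
   (x,y) |-> (y, rho y x).  Euler: V - E + F = 2 - 2g. *)
Definition rotation_system (T : finType) (e : rel T) (rho : T -> {perm T}) : Prop :=
  forall x : T,
    (forall y, rho x y != y -> e x y) /\
    (forall y z, e x y -> e x z -> fconnect (rho x) y z).

Definition face_map (T : finType) (rho : T -> {perm T}) (d : T * T) : T * T :=
  (d.2, rho d.2 d.1).

Definition darts (T : finType) (e : rel T) : pred (T * T) :=
  [pred d | e d.1 d.2].

(* number of faces (an edgeless graph, i.e. a single vertex, has one face) *)
Definition nfaces (T : finType) (e : rel T) (rho : T -> {perm T}) : nat :=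
  if #|darts e| == 0 then 1 else fcard (face_map rho) (darts e).

Definition nedges (T : finType) (e : rel T) : nat := #|darts e| %/ 2.

Definition euler_rot (T : finType) (e : rel T) (rho : T -> {perm T}) : int :=
  ((Posz #|T|) - (Posz (nedges e)) + (Posz (nfaces e rho)))%R.

Definition planar (T : finType) (e : rel T) : Prop :=
  exists rho, rotation_system e rho /\ euler_rot e rho = (Posz 2).

(* has a 2-cell embedding in the plane or the torus (epsilon >= 0) *)
Definition toroidal (T : finType) (e : rel T) : Prop :=
  exists rho, rotation_system e rho /\ (0 <= euler_rot e rho)%R.

(* epsilon(G) = 0 : G embeds 2-cellularly in the torus but not in the plane *)
Definition euler_char_zero (T : finType) (e : rel T) : Prop :=
  toroidal e /\ ~ planar e.

From mathcomp Require Import all_boot all_order all_fingroup all_algebra.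
From mathcomp Require Import lra zify.
Set Implicit Arguments. Unset Strict Implicit. Unset Printing Implicit Defensive.
Import Order.TTheory GRing.Theory Num.Theory.

(* Assume the minimum degree is at least 4 and fix a rotation system whose cellular embedding
   has V - E + F >= 0.  Each dart (u, v) on a face f gets the charge 2 - 4/deg v - 4/|f|, and
   these charges add up to -4 (V - E + F).  Forbidding the house and C2 restricts how triangles
   meet each other and short faces enough that charge can be moved from long faces to triangles
   so that every dart ends up nonnegative.  Hence V - E + F = 0: G embeds in the torus but not in
   the sphere.  Moreover a vertex of degree at least 5, or a cut vertex (through which some face
   passes twice, forcing that face to be long), would leave a dart with positive final charge;
   so G is 4-regular and 2-connected. *)

Lemma sum_inv_order (U : finType) (f : U -> U) (a : pred U) :
  injective f -> fclosed f a ->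
  (\sum_(x | a x) (fingraph.order f x)%:R^-1 = (fcard f a)%:R :> rat)%R.
Proof.
move=> f_inj a_cl; have f_sym := fconnect_sym f_inj.
have a_conn x y : fconnect f x y -> a x = a y by move/(closed_connect a_cl).
rewrite (partition_big (froot f) (fun r => a r && froots f r)); last first.
  by move=> x ax; rewrite (roots_root f_sym) andbT -(a_conn _ _ (connect_root _ x)).
rewrite /n_comp_mem -sum1_card natr_sum.
apply: eq_big => [r|r /andP[ar /eqP rr]]; first by rewrite !inE andbC.
have orbit_r x : (a x && (froot f x == r)) = fconnect f r x.
  apply/idP/idP => [/andP[_ /eqP <-]|rx]; first by rewrite f_sym connect_root.
  rewrite -(a_conn _ _ rx) ar /=; apply/eqP.
  by rewrite -rr; apply/esym/(fingraph.rootP f_sym).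
rewrite (eq_bigl _ _ orbit_r) (eq_bigr (fun _ => (fingraph.order f r)%:R^-1)%R); last first.
  by move=> x rx; rewrite /fingraph.order (eq_card (same_connect f_sym rx)).
rewrite sumr_const -[X in (_ *+ X)%R]/(fingraph.order f r) -(mulr_natr (_ : rat)^-1)%R.
by rewrite mulVf // pnatr_eq0 -lt0n fingraph.order_gt0.
Qed.

Lemma uniq5 (T : eqType) (a b c d h : T) :
  a != b -> a != c -> a != d -> a != h -> b != c -> b != d -> b != h ->
  c != d -> c != h -> d != h -> uniq [:: a; b; c; d; h].
Proof. by move=> *; rewrite /= !inE !negb_or; repeat (apply/andP; split). Qed.

Lemma uniq7 (T : eqType) (a b c d h x y : T) :
  a != b -> a != c -> a != d -> a != h -> a != x -> a != y ->
  b != c -> b != d -> b != h -> b != x -> b != y -> c != d -> c != h -> c != x -> c != y ->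
  d != h -> d != x -> d != y -> h != x -> h != y -> x != y -> uniq [:: a; b; c; d; h; x; y].
Proof. by move=> *; rewrite /= !inE !negb_or; repeat (apply/andP; split). Qed.

Lemma four_div_le (m n : nat) : (0 < m)%N -> (m <= n)%N -> (4 / n%:R <= 4 / m%:R :> rat)%R.
Proof.
move=> m_gt0 mn; rewrite ler_pM2l // lef_pV2 ?ler_nat // posrE ltr0n //.
exact: leq_trans mn.
Qed.

Lemma exists_iter_switch (U : Type) (P : pred U) (f : U -> U) a n :
  P a -> ~~ P (iter n f a) -> exists i, P (iter i f a) && ~~ P (iter i.+1 f a).
Proof.
move=> Pa; elim: n => [|n IH] /=; first by rewrite Pa.
case Pn: (P (iter n f a)) => nPn; first by exists n; rewrite Pn.
by apply: IH; rewrite Pn.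
Qed.

Section RotationSystem.
Variables (T : finType) (e : rel T) (rho : T -> {perm T}).
Hypotheses (e_sym : symmetric e) (e_irr : irreflexive e).
Hypothesis rho_rot : rotation_system e rho.

Lemma has_subgraph_nth n (H : rel 'I_n) (x0 : T) (s : seq T) :
  uniq s -> size s = n -> (forall i j : 'I_n, H i j -> e (nth x0 s i) (nth x0 s j)) ->
  has_subgraph H e.
Proof.
move=> s_uniq s_size sH; exists (fun i => nth x0 s i); split=> // i j /eqP.
by rewrite nth_uniq ?s_size // => /eqP/val_inj.
Qed.

Lemma edge_neq x y : e x y -> x != y.
Proof. by apply: contraTneq => ->; rewrite e_irr. Qed.

Lemma rot_edge x y : e x y -> e x (rho x y).
Proof.
move=> exy; have [->//|ne] := eqVneq (rho x y) y.
by apply: (rho_rot x).1; apply: contra_neq ne => /perm_inj.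
Qed.

Lemma rot_edgeV x y : e x (rho x y) -> e x y.
Proof. by have [->|/(rho_rot x).1] := eqVneq (rho x y) y. Qed.

Lemma rot_fix x y : ~~ e x y -> rho x y = y.
Proof. by move=> nxy; apply/eqP; apply: contraNT nxy => /(rho_rot x).1. Qed.

Lemma iter_rot_edge x y n : e x y -> e x (iter n (rho x) y).
Proof. by move=> exy; elim: n => //= n; apply: rot_edge. Qed.

Lemma order_rot x y : e x y -> fingraph.order (rho x) y = deg e x.
Proof.
move=> exy; apply: eq_card => z; rewrite !inE; apply/idP/idP.
  by move=> /iter_findex <-; apply: iter_rot_edge.
exact: (rho_rot x).2.
Qed.

Lemma iter_rot_deg x y : e x y -> iter (deg e x) (rho x) y = y.
Proof. by move=> exy; rewrite -(order_rot exy) iter_order //; apply: perm_inj. Qed.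

Lemma iter_rot_neq x y i j :
  e x y -> i < j -> j < deg e x -> iter i (rho x) y != iter j (rho x) y.
Proof.
move=> exy ij jd; rewrite -(order_rot exy) in jd.
have id := ltn_trans ij jd; apply: contraTneq ij => ij_eq.
by have := findex_iter jd; rewrite -ij_eq findex_iter // => ->; rewrite ltnn.
Qed.

Local Notation fnext := (face_map rho).

Definition fprev (d : T * T) := (((rho d.1)^-1)%g d.2, d.1).
Definition flen (d : T * T) := fingraph.order fnext d.
Definition rev_dart (d : T * T) := (d.2, d.1).

Lemma fnextK : cancel fnext fprev.
Proof. by case=> a b; rewrite /fprev /face_map /= permK. Qed.

Lemma fprevK : cancel fprev fnext.
Proof. by case=> a b; rewrite /fprev /face_map /= permKV. Qed.

Lemma fnext_inj : injective fnext. Proof. exact: can_inj fnextK. Qed.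
Lemma fprev_inj : injective fprev. Proof. exact: can_inj fprevK. Qed.

Lemma rev_dartK : involutive rev_dart. Proof. by case. Qed.
Lemma rev_dart_inj : injective rev_dart. Proof. exact: inv_inj rev_dartK. Qed.

Lemma flen_fnext d : flen (fnext d) = flen d.
Proof. by apply/esym/eq_card => z; apply: (same_fconnect1 fnext_inj). Qed.

Lemma flen_fprev d : flen (fprev d) = flen d.
Proof. by rewrite -{2}(fprevK d) flen_fnext. Qed.

Lemma iter_flen d : iter (flen d) fnext d = d.
Proof. exact/iter_order/fnext_inj. Qed.

Lemma iter_flen_neq d i : 0 < i < flen d -> iter i fnext d != d.
Proof.
case/andP=> i_gt0 i_lt; apply: contra_neq (lt0n_neq0 i_gt0) => /(congr1 (findex fnext d)).
by rewrite findex_iter // findex0.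
Qed.

Lemma fprev_tri d : flen d = 3 -> fprev d = fnext (fnext d).
Proof. by move=> d3; rewrite -{1}(iter_flen d) d3 fnextK. Qed.

Lemma fprev2_pent d : flen d = 5 -> fprev (fprev d) = fnext (fnext (fnext d)).
Proof. by move=> d5; rewrite -{1}(iter_flen d) d5 /= !fnextK. Qed.

Lemma fnext_dart d : e (fnext d).1 (fnext d).2 = e d.1 d.2.
Proof.
by case: d => a b; rewrite /face_map /= [e a b]e_sym; apply/idP/idP => [/rot_edgeV|/rot_edge].
Qed.

Lemma iter_fnext_dart d n : e d.1 d.2 -> e (iter n fnext d).1 (iter n fnext d).2.
Proof. by move=> hd; elim: n => //= n; rewrite fnext_dart. Qed.

Lemma darts_fclosed : fclosed fnext (darts e).
Proof. by move=> d d' /eqP <-; rewrite !inE /= fnext_dart. Qed.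

(* A non-dart (a, b) is traced back to itself in two steps, since rho fixes non-neighbours. *)
Lemma flen_gt2_dart d : 2 < flen d -> e d.1 d.2.
Proof.
move=> d_gt2; apply/negPn/negP => nd.
have := iter_flen_neq (d := d) (i := 2); rewrite d_gt2 => /(_ isT) /eqP; apply.
by case: d nd {d_gt2} => a b /= nab; rewrite /face_map /= !rot_fix // e_sym.
Qed.

Lemma dart_flen_gt2 d : 1 < deg e d.2 -> e d.1 d.2 -> 2 < flen d.
Proof.
case: d => a b /= deg_b eab; have ba := eab; rewrite e_sym in ba.
have := iter_flen (a, b); have := fingraph.order_gt0 fnext (a, b); rewrite -/(flen _).
case: (flen (a, b)) => [|[|[|n]]] //= _; rewrite /face_map /=.
  by case=> ab; rewrite ab e_irr in eab.
by case=> ra _; have := iter_rot_neq (i := 0) (j := 1) ba isT deg_b; rewrite /= ra eqxx.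
Qed.

Lemma tri_rot x y : flen (x, y) = 3 -> rho (rho y x) y = x /\ rho x (rho y x) = y.
Proof. by move=> t; have := iter_flen (x, y); rewrite t /face_map /= => -[-> ->]. Qed.

Lemma tri_edges x y : flen (x, y) = 3 -> [/\ e x y, e y (rho y x) & e (rho y x) x].
Proof.
move=> t; have exy : e x y by apply: (flen_gt2_dart (d := (x, y))); rewrite t.
split=> //; first by rewrite rot_edge // e_sym.
by have := iter_fnext_dart (d := (x, y)) 2 exy; rewrite /face_map /= (tri_rot t).1.
Qed.

Definition tri d := flen d == 3.
Definition tri_across d := tri (rev_dart d).

Lemma card_darts : #|darts e| = (nedges e).*2.
Proof.
pose lt_dart := [pred d : T * T | enum_rank d.1 < enum_rank d.2].
suff half : #|darts e| = #|[predI darts e & lt_dart]|.*2.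
  by rewrite /nedges half divn2 doubleK.
rewrite -(cardID lt_dart (darts e)) -addnn; congr (_ + _).
rewrite -[RHS](card_image rev_dart_inj); apply: eq_card => -[a b].
rewrite !inE /= -leqNgt; apply/andP/imageP => [[ba_le ab]|[[a' b'] /andP[/= ab' lt'] [-> ->]]].
  exists (b, a) => //; rewrite !inE /= e_sym ab ltn_neqAle ba_le andbT.
  by apply: contra_neq (edge_neq ab) => ba; rewrite (enum_rank_inj (val_inj ba)).
by rewrite ltnW // e_sym.
Qed.

Section Charges.
Local Open Scope ring_scope.

Definition vcharge (d : T * T) : rat := 4 / (deg e d.2)%:R.
Definition fcharge (d : T * T) : rat := 4 / (flen d)%:R.

Definition charge (d : T * T) : rat :=
  if e d.1 d.2 then 2 - vcharge d - fcharge d else 0.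

Lemma sum_fcharge : \sum_(d | e d.1 d.2) fcharge d = (4 * fcard fnext (darts e))%:R.
Proof.
rewrite -mulr_sumr natrM -(sum_inv_order fnext_inj darts_fclosed).
by congr (_ * _); apply: eq_bigl.
Qed.

Lemma sum_vcharge : (forall x, (0 < deg e x)%N) ->
  \sum_(d | e d.1 d.2) vcharge d = (4 * #|T|)%:R.
Proof.
move=> deg_gt0; rewrite big_mkcond /=.
rewrite -(pair_big predT predT (fun u w => if e u w then vcharge (u, w) else 0)) /=.
rewrite exchange_big (eq_bigr (fun _ => 4)) ?sumr_const ?natrM ?mulr_natr // => w _.
rewrite -big_mkcond /= /vcharge /= sumr_const (eq_card (B := nbhd e w)) => [|u].
  by rewrite -(mulr_natr (4 / _)) divfK // pnatr_eq0 -lt0n deg_gt0.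
by rewrite !inE e_sym.
Qed.

Lemma sum_charge (x0 : T) : (forall x, (0 < deg e x)%N) ->
  \sum_d charge d = - 4 * (euler_rot e rho)%:~R.
Proof.
move=> deg_gt0; have darts_n0 : #|darts e| != 0%N.
  have /card_gt0P[y] := deg_gt0 x0; rewrite inE => x0y.
  by apply/eqP => /card0_eq/(_ (x0, y)); rewrite inE /= x0y.
rewrite -big_mkcond /= !sumrB sum_vcharge // sum_fcharge sumr_const.
rewrite /euler_rot /nfaces (negbTE darts_n0) card_darts !rmorphD !rmorphN /=.
rewrite -muln2 -!pmulrn -[2 *+ _]mulr_natr natrM; lra.
Qed.

End Charges.

Lemma del_vertex_sym v : symmetric (del_vertex e v).
Proof. by move=> a b; rewrite /del_vertex /= [e a b]e_sym; case: (e b a) => //=; apply: andbC. Qed.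

Lemma exists_nbr_connect_del_vertex v u : connected_graph e -> u != v ->
  exists2 p, e p v & connect (del_vertex e v) u p.
Proof.
move=> conn uv; have /connectP[s pth lst] := conn u v.
elim: s u uv pth lst => [|w s IH] u uv /=; first by move=> _ uv_eq; rewrite uv_eq eqxx in uv.
case/andP=> uw pth lst; have [wv|wv] := eqVneq w v.
  by exists u; [rewrite -wv | exact: connect0].
have [p pv wp] := IH w wv pth lst; exists p => //; apply: connect_trans wp.
by apply: connect1; rewrite /del_vertex /= uw uv wv.
Qed.

(* Walking around [v] from a neighbour on the side of [x] to one on the side of [y] must cross
   from one component of [G - v] to another between two consecutive neighbours. *)
Lemma cut_vertex_split v x y : connected_graph e -> x != v -> y != v ->
  ~~ connect (del_vertex e v) x y -> exists2 a, e v a & ~~ connect (del_vertex e v) a (rho v a).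
Proof.
move=> conn xv yv nxy; set G := del_vertex e v.
have G_sym : connect_sym G by apply/sym_connect_sym/del_vertex_sym.
have [p pv xp] := exists_nbr_connect_del_vertex conn xv.
have [q qv yq] := exists_nbr_connect_del_vertex conn yv.
have npq : ~~ connect G p (iter (findex (rho v) p q) (rho v) p).
  rewrite iter_findex; last by apply: (rho_rot v).2; rewrite e_sym.
  apply: contra nxy => pq; apply: connect_trans xp (connect_trans pq _); by rewrite G_sym.
have [i /andP[pa nab]] := exists_iter_switch (connect0 G p) npq.
exists (iter i (rho v) p); first by apply: iter_rot_edge; rewrite e_sym.
by apply: contra nab; apply: connect_trans.
Qed.

Section Configurations.
Hypothesis deg_gt3 : forall x, 3 < deg e x.
Hypotheses (C1_free : ~ has_subgraph C1 e) (C2_free : ~ has_subgraph C2 e).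

Ltac neq := solve [ apply: edge_neq; (by []) | rewrite eq_sym; apply: edge_neq; (by [])
                  | by [] | by rewrite eq_sym ].

Lemma rot_neq x y i j : e x y -> i < j < 4 -> iter i (rho x) y != iter j (rho x) y.
Proof. by move=> exy /andP[ij j4]; apply: iter_rot_neq => //; apply: leq_trans j4 (deg_gt3 x). Qed.

Lemma iter_rot4 x y : e x y -> deg e x = 4 -> iter 4 (rho x) y = y.
Proof. by move=> exy <-; apply: iter_rot_deg. Qed.

Lemma flen_gt2 d : e d.1 d.2 -> 2 < flen d.
Proof. by apply: dart_flen_gt2; apply: ltn_trans (deg_gt3 _). Qed.

Lemma no_house (a b c d h : T) : uniq [:: a; b; c; d; h] ->
  e a b -> e b c -> e c d -> e d a -> e a h -> e h b -> False.
Proof.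
move=> s_uniq ? ? ? ? ? ?; apply: C1_free; apply: (has_subgraph_nth (x0 := a) s_uniq) => //.
by move=> [[|[|[|[|[|i]]]]] ?] [[|[|[|[|[|j]]]]] ?] //; rewrite e_sym.
Qed.

Lemma no_C2 (u1 u2 u3 u4 u5 x y : T) : uniq [:: u1; u2; u3; u4; u5; x; y] ->
  e u1 u2 -> e u2 u3 -> e u3 u4 -> e u4 u5 -> e u5 u1 -> e x u5 -> e x u1 -> e y u1 -> e y u2 ->
  False.
Proof.
move=> s_uniq ? ? ? ? ? ? ? ? ?; apply: C2_free; apply: (has_subgraph_nth (x0 := u1) s_uniq) => //.
by move=> [[|[|[|[|[|[|[|i]]]]]]] ?] [[|[|[|[|[|[|[|j]]]]]]] ?] //; rewrite e_sym.
Qed.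

Lemma rot_neq1 x a : e x a -> rho x a != a.
Proof. by move=> h; rewrite eq_sym; apply: (rot_neq (i:=0) (j:=1) h). Qed.

Lemma no_rot_cycle2 x a b : e x a -> rho x a = b -> rho x b = a -> False.
Proof. by move=> h e1 e2; have := rot_neq (i:=0) (j:=2) h isT; rewrite /= e1 e2 eqxx. Qed.

Lemma no_rot_cycle3 x a b c : e x a -> rho x a = b -> rho x b = c -> rho x c = a -> False.
Proof. by move=> h e1 e2 e3; have := rot_neq (i:=0) (j:=3) h isT; rewrite /= e1 e2 e3 eqxx. Qed.

(* The 4-cycle [x y2 y1 y] and the triangle [x y3 y2] form a house. *)
Lemma no_rot_path3 x y y1 y2 y3 : e x y -> rho x y = y1 -> rho x y1 = y2 -> rho x y2 = y3 ->
  e y y1 -> e y1 y2 -> e y2 y3 -> False.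
Proof.
move=> h r1 r2 r3 a1 a2 a3.
have n01 : y != y1 by rewrite -r1; apply: (rot_neq (i:=0) (j:=1) h).
have n02 : y != y2 by rewrite -r2 -r1; apply: (rot_neq (i:=0) (j:=2) h).
have n03 : y != y3 by rewrite -r3 -r2 -r1; apply: (rot_neq (i:=0) (j:=3) h).
have n12 : y1 != y2 by rewrite -r2 -r1; apply: (rot_neq (i:=1) (j:=2) h).
have n13 : y1 != y3 by rewrite -r3 -r2 -r1; apply: (rot_neq (i:=1) (j:=3) h).
have n23 : y2 != y3 by rewrite -r3 -r2 -r1; apply: (rot_neq (i:=2) (j:=3) h).
have h1 : e x y1 by rewrite -r1; apply: rot_edge.
have h2 : e x y2 by rewrite -r2; apply: rot_edge.
have h3 : e x y3 by rewrite -r3; apply: rot_edge.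
apply: (no_house (a := x) (b := y2) (c := y1) (d := y) (h := y3)).
  by apply: uniq5; neq.
all: by rewrite // e_sym.
Qed.

(* A quadrilateral and a triangle sharing an edge form a house. *)
Lemma flen_neq4_tri_across d : tri_across d -> flen d != 4.
Proof.
case: d => u w; rewrite /tri_across /tri /rev_dart /= => /eqP t3.
have [ewu euz ezw] := tri_edges t3.
have [t1 t2] := tri_rot t3.
apply/eqP => h4.
have := iter_flen (u,w); rewrite h4 /= /face_map /=.
set p := rho w u; set q := rho p w; set z := rho u w.
move=> -[e1 e2]; rewrite e1 in e2.
have euw : e u w by rewrite e_sym.
have ewp : e w p by apply: rot_edge.
have epq : e p q by apply: rot_edge; rewrite e_sym.
have eqp : e q p by rewrite e_sym.
have equ : e q u by rewrite -e1; apply: rot_edge.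
have ezw' : e z w by rewrite e_sym in ezw; rewrite -/z in ezw *; move: ezw; rewrite e_sym.
have nup : u != p by rewrite eq_sym rot_neq1.
have nwq : w != q by rewrite eq_sym rot_neq1 // e_sym.
have npz : p != z.
  apply/eqP => E; apply: (no_rot_cycle2 (x:=w) (a:=u) (b:=p)) => //.
  by rewrite E t2.
have nqz : q != z.
  apply/eqP => E; apply: (no_rot_cycle2 (x:=u) (a:=w) (b:=q)) => //.
apply: (no_house (a:=u) (b:=w) (c:=p) (d:=q) (h:=z)); first by apply: uniq5 => //; neq.
all: try done.
all: try (by rewrite e_sym -e1; apply: rot_edge).
all: by rewrite -/z; apply: rot_edge.
Qed.

(* Otherwise the three triangles would be consecutive around a common vertex. *)
Lemma no_tri_two_tri_across r : flen r = 3 -> tri_across r -> tri_across (fnext r) -> False.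
Proof.
case: r => x y; rewrite /tri_across /tri /rev_dart /face_map /= => h3 /eqP t1 /eqP t2.
have [exy eyz ezx] := tri_edges h3.
have [eyx exw ewy] := tri_edges t1.
have [_ rw] := tri_rot t1.
have [ezy eyv evz] := tri_edges t2.
apply: (no_rot_path3 (x:=y) (y:=rho x y) (y1:=x) (y2:=rho y x) (y3:=rho y (rho y x))) => //.
all: by rewrite e_sym.
Qed.

(* The pentagon and the two triangles form [C2], unless a chord of the pentagon closes a house. *)
Lemma no_pent_two_tri_across d : flen d = 5 -> tri_across d -> tri_across (fnext d) -> False.
Proof.
case: d => p u h5; rewrite /tri_across /tri /rev_dart /face_map /= => /eqP t1 /eqP t2.
have epu : e p u by apply: (flen_gt2_dart (d:=(p,u))); rewrite h5.
have [eup epx exu] := tri_edges t1.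
have [xr1 xr2] := tri_rot t1.
have [equ euy eyq] := tri_edges t2.
have := iter_flen (p,u); rewrite h5 /= /face_map /=.
set q := rho u p in t2 equ euy eyq *; set r1 := rho q u; set r2 := rho r1 q.
set x := rho p u in epx exu xr1 xr2 *; set y := rho u q in euy eyq *.
move=> -[e1 e2]; rewrite e1 in e2.
have euq : e u q by apply: rot_edge.
have eqr1 : e q r1 by apply: rot_edge; rewrite e_sym.
have er1r2 : e r1 r2 by apply: rot_edge; rewrite e_sym.
have er2p : e r2 p by rewrite -e1; apply: rot_edge; rewrite e_sym.
have nur1 : u != r1 by rewrite eq_sym rot_neq1 // e_sym.
have nur2 : u != r2.
  apply/eqP => E; rewrite -E in e2; have := rot_neq1 epu; rewrite e2 eqxx //.
have nqr2 : q != r2 by rewrite eq_sym rot_neq1 // e_sym.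
have nqp : q != p by rewrite rot_neq1.
have nqx : q != x.
  by apply/eqP => E; apply: (no_rot_cycle2 (x:=u) (a:=p) (b:=q)) => //; rewrite E.
have nr1p : r1 != p by rewrite -e1 eq_sym rot_neq1 // e_sym.
have npy : p != y.
  by apply/eqP => E; apply: (no_rot_cycle2 (x:=u) (a:=p) (b:=q)) => //; rewrite -/y -E.
have nxy : x != y.
  apply/eqP => E; apply: (no_rot_cycle3 (x:=u) (a:=x) (b:=p) (c:=q)) => //; try by rewrite e_sym.
have chord1 : e u r1 -> False.
  move=> eur1; apply: (no_house (a:=u) (b:=r1) (c:=r2) (d:=p) (h:=q)) => //.
  by apply: uniq5 => //; neq.
have chord2 : e u r2 -> False.
  move=> eur2; apply: (no_house (a:=r2) (b:=u) (c:=q) (d:=r1) (h:=p)) => //.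
  - by apply: uniq5 => //; neq.
  - by rewrite e_sym.
have nr1x : r1 != x by apply/eqP => E; apply: chord1; rewrite E e_sym.
have nr1y : r1 != y by apply/eqP => E; apply: chord1; rewrite E.
have nr2x : r2 != x by apply/eqP => E; apply: chord2; rewrite E e_sym.
have nr2y : r2 != y by apply/eqP => E; apply: chord2; rewrite E.
apply: (no_C2 (u1:=u) (u2:=q) (u3:=r1) (u4:=r2) (u5:=p) (x:=x) (y:=y)) => //.
- by apply: uniq7 => //; neq.
- by rewrite e_sym.
- by rewrite e_sym.
Qed.

(* Otherwise three of the four faces around [r.2] would be consecutive triangles. *)
Lemma deg2_neq4_tri_fan r : flen r = 3 ->
  tri_across (fnext r) -> tri_across (fprev (rev_dart r)) -> deg e r.2 != 4.
Proof.
case: r => x y; rewrite /tri_across /tri /rev_dart /fprev /face_map /= => h3 /eqP t1 /eqP t2.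
apply/eqP => d4.
set t := ((rho y)^-1)%g x in t2.
have ryt : rho y t = x by rewrite /t permKV.
have [exy eyz ezx] := tri_edges h3.
have [ezy eyw ewz] := tri_edges t1.
have [eyt ets est] := tri_edges t2.
have [_ rys] := tri_rot t2.
have rwt : rho y (rho y (rho y x)) = t.
  by have := iter_rot4 eyt d4; rewrite /= ryt.
have sw : rho t y = rho y (rho y x) by apply: (perm_inj (s:=rho y)); rewrite rys rwt.
apply: (no_rot_path3 (x:=y) (y:=x) (y1:=rho y x) (y2:=rho y (rho y x)) (y3:=t)) => //.
- by rewrite e_sym.
- by rewrite e_sym.
- by rewrite e_sym.
- by rewrite -sw e_sym.
Qed.

(* Otherwise three of the four faces around [r.1] would be consecutive triangles. *)
Lemma deg1_neq4_tri_fan r : flen r = 3 ->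
  tri_across (fprev r) -> tri_across (fnext (rev_dart r)) -> deg e r.1 != 4.
Proof.
case: r => z x h3; rewrite (fprev_tri h3).
rewrite /tri_across /tri /rev_dart /face_map /= => /eqP t1 /eqP t2.
have [ry rz] := tri_rot h3.
rewrite ry in t1.
have [ezx exy eyz] := tri_edges h3.
have [ezy eyw ewz] := tri_edges t1.
have [rw rzw] := tri_rot t1.
have [etz ezs est] := tri_edges t2.
set y := rho x z in ry rz t1 exy eyz ezy eyw ewz rw rzw *.
apply/eqP => d4.
have ezw : e z (rho y z) by rewrite e_sym.
have rzt : rho z (rho z x) = rho y z.
  by have := iter_rot4 ezw d4; rewrite /= rzw rz.
apply: (no_rot_path3 (x:=z) (y:=rho z x) (y1:=rho y z) (y2:=y) (y3:=x)) => //.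
- by apply: rot_edge.
- by rewrite -rzt e_sym.
- by rewrite e_sym.
- by rewrite e_sym.
Qed.

Lemma exists_nontri_dart_to x : exists2 p, e p x & ~~ tri (p, x).
Proof.
have /card_gt0P [y]: 0 < #|nbhd e x| by apply: leq_trans (deg_gt3 x).
rewrite /nbhd inE => exy.
have h1 : e x (rho x y) by apply: rot_edge.
have h2 : e x (rho x (rho x y)) by apply: rot_edge.
case t0: (tri (y,x)); last by exists y; [rewrite e_sym | rewrite t0].
case t1: (tri (rho x y, x)); last by exists (rho x y); [rewrite e_sym | rewrite t1].
case t2: (tri (rho x (rho x y), x)); last by exists (rho x (rho x y)); [rewrite e_sym | rewrite t2].
exfalso; move/eqP: t0 => t0; move/eqP: t1 => t1; move/eqP: t2 => t2.
have [_ _ a0] := tri_edges t0.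
have [_ _ a1] := tri_edges t1.
have [_ _ a2] := tri_edges t2.
apply: (no_rot_path3 (x := x) (y := y) (y1 := rho x y) (y2 := rho x (rho x y))
  (y3 := rho x (rho x (rho x y)))) => //.
all: by rewrite e_sym.
Qed.

Section Discharging.
Local Open Scope ring_scope.

Definition next_across_tri d := tri_across (fnext (rev_dart d)).
Definition next2_across_tri d := tri_across (fnext (fnext (rev_dart d))).
Definition bonus d :=
  (next_across_tri d && ~~ tri_across (fprev d)) || (next2_across_tri d && ~~ tri_across (fnext d)).

(* With minimum degree 4, a dart starts with charge at least -1/3 on a triangle, 0 on a
   quadrilateral, 1/5 on a pentagon and 1/3 on longer faces.  The rules move charge from long
   faces to the triangles across their edges, and between neighbouring triangles; [inflow d]
   collects what the rules send to [d]. *)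
Definition send_across d : rat :=
  if tri_across d && (4 < flen d)%N then
    if flen d == 5%N then 1/2 else 1/3 + (if bonus d then 1/6 else 0)
  else 0.

Definition send_next d : rat :=
  if ~~ tri_across d && tri_across (fnext d) then
    if flen d == 5%N then (if tri_across (fprev d) then 1/10 else 1/5)
    else if (5 < flen d)%N && next_across_tri (fnext d) then 1/6 else 0
  else 0.

Definition send_prev d : rat :=
  if ~~ tri_across d && tri_across (fprev d) then
    if flen d == 5%N then (if tri_across (fnext d) then 1/10 else 1/5)
    else if (5 < flen d)%N && next2_across_tri (fprev d) then 1/6 else 0
  else 0.

Definition send_tri_next d : rat :=
  if tri d && ~~ tri_across d && tri_across (fnext d) then 1/6 else 0.

Definition send_tri_prev d : rat :=
  if tri d && ~~ tri_across d && tri_across (fprev d) then 1/6 else 0.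

Definition send_tri_shift d : rat :=
  if tri d && tri_across d && tri_across (fnext (rev_dart (fnext d))) then 1/6 else 0.

Definition outflow d :=
  send_across d + send_next d + send_prev d + send_tri_next d + send_tri_prev d + send_tri_shift d.

Definition inflow d :=
  send_across (rev_dart d) + send_next (fprev d) + send_prev (fnext d)
  + send_tri_next (fprev d) + send_tri_prev (fnext d) + send_tri_shift (fprev d).

Definition final_charge d := charge d - outflow d + inflow d.

Lemma nondart_flen_lt3 d : ~~ e d.1 d.2 -> (flen d < 3)%N.
Proof. by move=> h; rewrite ltnNge; apply: contra h => /flen_gt2_dart. Qed.

Lemma sends_short_face x : (flen x < 3)%N ->
  send_across x = 0 /\ send_next x = 0 /\ send_prev x = 0 /\
  send_tri_next x = 0 /\ send_tri_prev x = 0 /\ send_tri_shift x = 0.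
Proof.
rewrite /send_across /send_next /send_prev /send_tri_next /send_tri_prev /send_tri_shift /tri.
by case: (flen x) => [|[|[|n]]] //= _; rewrite !andbF !if_same; repeat split.
Qed.

Lemma final_charge_nondart d : ~~ e d.1 d.2 -> final_charge d = 0.
Proof.
move=> nd; have nd' : ~~ e (rev_dart d).1 (rev_dart d).2 by rewrite /= e_sym.
have s3 : (flen (fprev d) < 3)%N by rewrite flen_fprev nondart_flen_lt3.
have s4 : (flen (fnext d) < 3)%N by rewrite flen_fnext nondart_flen_lt3.
rewrite /final_charge /outflow /inflow /charge (negbTE nd).
have [-> [-> [-> [-> [-> ->]]]]] := sends_short_face (nondart_flen_lt3 nd).
have [-> _] := sends_short_face (nondart_flen_lt3 nd').
have [_ [-> [_ [-> [_ ->]]]]] := sends_short_face s3.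
have [_ [_ [-> [_ [-> _]]]]] := sends_short_face s4.
by lra.
Qed.

Lemma tri_across_rev d : tri_across (rev_dart d) = tri d.
Proof. by rewrite /tri_across rev_dartK. Qed.
Lemma tri_fprev d : tri (fprev d) = tri d.
Proof. by rewrite /tri flen_fprev. Qed.
Lemma tri_fnext d : tri (fnext d) = tri d.
Proof. by rewrite /tri flen_fnext. Qed.
Lemma fnext3_tri d : flen d = 3%N -> fnext (fnext (fnext d)) = d.
Proof. by move=> h; rewrite -[RHS](iter_flen d) h. Qed.

Lemma vcharge_bounds d : 0 <= vcharge d /\ vcharge d <= 1.
Proof.
split; first by rewrite divr_ge0.
by have := four_div_le (n := deg e d.2) (m := 4) isT (deg_gt3 d.2); rewrite divff.
Qed.

Lemma vcharge_le_4_5 d : deg e d.2 != 4%N -> vcharge d <= 4 / 5%:R.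
Proof. by move=> d_neq4; apply: four_div_le => //; rewrite ltn_neqAle eq_sym d_neq4 deg_gt3. Qed.

Lemma charge_dart d : e d.1 d.2 -> charge d = 2 - vcharge d - fcharge d.
Proof. by rewrite /charge => ->. Qed.

Ltac unfold_flows hd :=
  rewrite /final_charge /outflow /inflow (charge_dart hd) /send_across /send_next /send_prev
    /send_tri_next /send_tri_prev /send_tri_shift tri_across_rev !tri_fprev !tri_fnext fprevK fnextK
    flen_fprev flen_fnext.

Ltac prune := cbv beta delta [negb andb orb implb] iota;
  try (intros; match goal with H : is_true false |- _ => discriminate H end).

Lemma final_charge_tri d : flen d = 3%N -> 0 <= final_charge d.
Proof.
move=> d3; have hd : e d.1 d.2 by apply: flen_gt2_dart; rewrite d3.
have [v_ge0 v_le1] := vcharge_bounds d.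
have d1 : flen (fnext d) = 3%N by rewrite flen_fnext.
have d2 : flen (fnext (fnext d)) = 3%N by rewrite !flen_fnext.
have t01 : ~~ (tri_across d && tri_across (fnext d)).
  by apply/andP => -[]; apply: no_tri_two_tri_across.
have t20 : ~~ (tri_across d && tri_across (fnext (fnext d))).
  by apply/andP => -[t0 t2]; apply: (no_tri_two_tri_across d2 t2); rewrite fnext3_tri.
have t12 : ~~ (tri_across (fnext d) && tri_across (fnext (fnext d))).
  by apply/andP => -[]; apply: no_tri_two_tri_across.
have across_tri : tri_across d ==> ~~ (4 < flen (rev_dart d))%N.
  by apply/implyP => /eqP ->.
have across_long : ~~ tri_across d ==> (4 < flen (rev_dart d))%N.
  apply/implyP => not_tri; have := flen_gt2 (d := rev_dart d); rewrite /= e_sym => /(_ hd).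
  have := flen_neq4_tri_across (d := rev_dart d); rewrite tri_across_rev /tri d3 => /(_ isT).
  by move: not_tri; rewrite /tri_across /tri; case: (flen (rev_dart d)) => [|[|[|[|[|n]]]]].
have v_fan1 : vcharge d <=
    if tri_across d && tri_across (fnext (rev_dart (fnext d))) then 4 / 5%:R else 1.
  case: ifP => // /andP[t0 t]; apply: vcharge_le_4_5.
  by have := deg1_neq4_tri_fan d1; rewrite fnextK; apply.
have v_fan2 : vcharge d <=
    if tri_across (fnext d) && tri_across (fprev (rev_dart d)) then 4 / 5%:R else 1.
  by case: ifP => // /andP[t1 t]; apply: vcharge_le_4_5; apply: deg2_neq4_tri_fan.
unfold_flows hd; rewrite (fprev_tri d3) /bonus /next_across_tri /next2_across_tri rev_dartK.
rewrite {1 2 3 4 5 6 7}/tri d3 eqxx !if_same /fcharge d3 (_ : (4 < 3)%N = false) // andbF.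
move: t01 t20 t12 across_tri across_long v_fan1 v_fan2.
case: (tri_across d); prune; case: (tri_across (fnext d)); prune;
case: (tri_across (fnext (fnext d))); prune; case: (4 < flen (rev_dart d))%N; prune;
case: (tri_across (fprev (rev_dart d))); prune; case: (tri_across (fnext (rev_dart d))); prune;
case: (tri_across (fnext (rev_dart (fnext d)))); prune; case: (flen (rev_dart d) == 5%N); prune.
all: intros; lra.
Qed.

Lemma final_charge_quad d : flen d = 4%N -> final_charge d = 1 - vcharge d.
Proof.
move=> h4; have hd : e d.1 d.2 by apply: flen_gt2_dart; rewrite h4.
unfold_flows hd; rewrite /tri h4 /fcharge (_ : (4 < 4)%N = false) // (_ : (5 < 4)%N = false) //.
rewrite (_ : (4 == 3)%N = false) // (_ : (4 == 5)%N = false) //.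
rewrite !andbF !andFb; cbv beta delta [negb andb orb implb] iota; rewrite ?if_same.
rewrite h4 (_ : 4 / 4%:R = 1 :> rat); last by rewrite divff.
lra.
Qed.

Lemma final_charge_pent d : flen d = 5%N -> 1 - vcharge d <= final_charge d.
Proof.
move=> d5; have hd : e d.1 d.2 by apply: flen_gt2_dart; rewrite d5.
have [v_ge0 v_le1] := vcharge_bounds d.
have t01 : ~~ (tri_across d && tri_across (fnext d)).
  by apply/andP => -[]; apply: no_pent_two_tri_across.
have t40 : ~~ (tri_across (fprev d) && tri_across d).
  apply/andP => -[t4 t0]; apply: (no_pent_two_tri_across (d := fprev d)) => //.
    by rewrite flen_fprev.
  by rewrite fprevK.
have t23 : ~~ (tri_across (fnext (fnext d)) && tri_across (fprev (fprev d))).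
  apply/andP => -[t2]; rewrite fprev2_pent //.
  by move=> t3; apply: (no_pent_two_tri_across (d := fnext (fnext d))); rewrite ?flen_fnext.
unfold_flows hd; rewrite /fcharge /tri d5 eqxx.
rewrite (_ : (4 < 5)%N = true) // (_ : (5 == 3)%N = false) //.
rewrite ?andbF ?andFb ?andbT; cbv beta delta [negb andb orb implb] iota; rewrite ?if_same.
move: t01 t40 t23.
case: (tri_across d); prune; case: (tri_across (fnext d)); prune;
case: (tri_across (fprev d)); prune; case: (tri_across (fnext (fnext d))); prune;
case: (tri_across (fprev (fprev d))); prune.
all: intros; lra.
Qed.

Lemma final_charge_long d : (5 < flen d)%N ->
  1 - vcharge d + (2/3 - fcharge d) +
  (if ~~ tri_across d && ~~ tri_across (fnext d) then 1/6 else 0)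
  <= final_charge d.
Proof.
move=> d_gt5; have hd : e d.1 d.2 by apply: flen_gt2_dart; apply: leq_trans d_gt5.
have n5 : (flen d == 5%N) = false by apply/negbTE; move: d_gt5; case: (flen d) => [|[|[|[|[|[|]]]]]].
have n3 : (flen d == 3%N) = false by apply/negbTE; move: d_gt5; case: (flen d) => [|[|[|[|]]]].
have n4 : (4 < flen d)%N by apply: ltnW.
unfold_flows hd; rewrite /tri n5 n3 d_gt5 n4 /bonus.
rewrite ?andbF ?andFb ?andbT; cbv beta delta [negb andb orb implb] iota; rewrite ?if_same.
rewrite /next_across_tri ?fprevK.
case: (tri_across d); prune; case: (tri_across (fnext d)); prune;
case: (tri_across (fprev d)); prune; case: (tri_across (fnext (rev_dart d))); prune;
case: (next2_across_tri d); prune;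
case: (tri_across (fnext (rev_dart (fnext d)))); prune; case: (next2_across_tri (fprev d)); prune.
all: intros; lra.
Qed.

Lemma final_charge_nontri d : e d.1 d.2 -> ~~ tri d -> 1 - vcharge d <= final_charge d.
Proof.
move=> hd nt; have := flen_gt2 hd; have [v_ge0 v_le1] := vcharge_bounds d.
move: nt; rewrite /tri.
case d_len: (flen d) => [|[|[|[|[|[|n]]]]]] //= _ _.
- by rewrite final_charge_quad.
- exact: final_charge_pent.
- have d_gt5 : (5 < flen d)%N by rewrite d_len.
  have := final_charge_long d_gt5.
  have := four_div_le (n := flen d) (m := 6) isT d_gt5; rewrite -/(fcharge d).
  case: ifP => _ *; lra.
Qed.

Lemma final_charge_ge0 d : 0 <= final_charge d.
Proof.
have [hd|nd] := boolP (e d.1 d.2); last by rewrite final_charge_nondart.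
have [v_ge0 v_le1] := vcharge_bounds d.
have [t|nt] := boolP (tri d); first by apply: final_charge_tri; apply/eqP.
have := final_charge_nontri hd nt; lra.
Qed.

Lemma sum_final_charge : \sum_d final_charge d = \sum_d charge d.
Proof.
have E : \sum_d inflow d = \sum_d outflow d.
  rewrite /inflow /outflow !big_split /=.
  have reindex (F : T * T -> rat) (h : T * T -> T * T) :
      injective h -> \sum_d F (h d) = \sum_d F d.
    by move=> h_inj; rewrite [RHS](reindex_inj h_inj).
  rewrite (reindex _ _ rev_dart_inj) (reindex _ _ fprev_inj) (reindex _ _ fnext_inj).
  by rewrite (reindex _ _ fprev_inj) (reindex _ _ fnext_inj) (reindex _ _ fprev_inj).
by rewrite /final_charge big_split sumrB /= E subrK.
Qed.

Lemma final_charge_gt0_long d : (5 < flen d)%N ->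
  (6 < flen d)%N || (~~ tri_across d && ~~ tri_across (fnext d)) -> 0 < final_charge d.
Proof.
move=> d_gt5 d_case; have := final_charge_long d_gt5; have [_ v_le1] := vcharge_bounds d.
case/orP: d_case => [d_gt6|->].
  have := four_div_le (n := flen d) (m := 7) isT d_gt6; rewrite -/(fcharge d).
  by case: ifP => _; lra.
by have := four_div_le (n := flen d) (m := 6) isT d_gt5; rewrite -/(fcharge d); lra.
Qed.

Lemma sum_final_charge_euler (x0 : T) : \sum_d final_charge d = - 4 * (euler_rot e rho)%:~R.
Proof. by rewrite sum_final_charge (sum_charge x0) // => x; apply: ltn_trans (deg_gt3 x). Qed.

Lemma euler_rot_le0 (x0 : T) : euler_rot e rho <= 0.
Proof.
have : 0 <= \sum_d final_charge d by apply: sumr_ge0 => d _; apply: final_charge_ge0.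
by rewrite (sum_final_charge_euler x0) -(ler_int rat) mulr0z; lra.
Qed.

Lemma euler_rot_lt0 d : 0 < final_charge d -> euler_rot e rho < 0.
Proof.
move=> d_pos; have : 0 < \sum_d final_charge d.
  rewrite (bigD1 d) //=; have : 0 <= \sum_(d' | d' != d) final_charge d'.
    by apply: sumr_ge0 => d' _; apply: final_charge_ge0.
  lra.
by rewrite (sum_final_charge_euler d.1) -(ltr_int rat) mulr0z; lra.
Qed.

(* A vertex of degree at least 5 is the head of a dart whose final charge is at least 1 - 4/5. *)
Lemma deg_eq4 x : 0 <= euler_rot e rho -> deg e x = 4%N.
Proof.
move=> eul_ge0; apply/eqP; apply: contraTT eul_ge0 => x_neq4; rewrite -ltNge.
have [p e_px nontri_px] := exists_nontri_dart_to x.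
apply: (euler_rot_lt0 (d := (p, x))); have := final_charge_nontri (d := (p, x)) e_px nontri_px.
by have := vcharge_le_4_5 (d := (p, x)) x_neq4; lra.
Qed.

End Discharging.

Section CutVertex.
Variables (v a : T).
Hypotheses (e_va : e v a) (cut_va : ~~ connect (del_vertex e v) a (rho v a)).

Local Notation d0 := (a, v).
Local Notation k := (flen d0).
Local Notation walk j := (iter j fnext d0).2.

Lemma e_av : e a v. Proof. by rewrite e_sym. Qed.

Lemma walk_edge j : e (walk j) (walk j.+1).
Proof. by have := iter_fnext_dart (d := d0) j.+1 e_av; rewrite iterS. Qed.

Lemma walk_rot j : walk j.+2 = rho (walk j.+1) (walk j).
Proof. by []. Qed.

Lemma walk_neq2 j : walk j.+2 != walk j.
Proof. by rewrite walk_rot rot_neq1 // e_sym walk_edge. Qed.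

Lemma walk_flen : walk k = v.
Proof. by rewrite iter_flen. Qed.

Lemma walk_flen_pred : walk k.-1 = a.
Proof.
have k_gt0 : (0 < k)%N by apply: leq_trans (flen_gt2 (d := d0) e_av).
by have := iter_flen d0; rewrite -(prednK k_gt0) iterS => /(congr1 fprev); rewrite fnextK => ->.
Qed.

(* The face walk starts at [v], then leaves towards [rho v a] and ends at [a]; as these two
   neighbours are separated by [v], the walk passes through [v] in between. *)
Lemma walk_returns : exists2 j, (2 < j < k.-2)%N & walk j = v.
Proof.
have k_gt2 := flen_gt2 (d := d0) e_av; have k_gt0 := ltnW (ltnW k_gt2).
suff [j /andP[j_gt0 j_lt] wj] : exists2 j, (0 < j < k.-1)%N & walk j = v.
  exists j => //; have j_neq1 : j != 1%N.
    by apply: contra_eqN wj => /eqP ->; rewrite eq_sym edge_neq ?rot_edge.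
  have j_neq2 : j != 2%N by apply: contra_eqN wj => /eqP ->; apply: walk_neq2.
  have j_neq : j != k.-2.
    apply: contra_eqN wj => /eqP ->; have := walk_neq2 k.-2.
    by rewrite -subn2 -addn2 subnK ?walk_flen 1?eq_sym // ltnW.
  by move: j_gt0 j_lt j_neq1 j_neq2 j_neq; clear; lia.
case: (pickP [pred i : 'I_k | (0 < i)%N && (walk i == v)]) => [[j j_lt] | none].
  case/andP=> /= j_gt0 /eqP wj; exists j => //; rewrite j_gt0 /= ltn_neqAle -ltnS prednK //.
  by rewrite j_lt andbT; apply: contra_eqN wj => /eqP ->; rewrite walk_flen_pred edge_neq // e_av.
exfalso; have walk_connect j : (0 < j < k)%N -> connect (del_vertex e v) (rho v a) (walk j).
  elim: j => [//|[_ _|j IH /andP[_ j_lt]]]; first exact: connect0.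
  apply: connect_trans (IH _) (connect1 _); first by rewrite /= ltnW.
  have := none (Ordinal j_lt); have := none (Ordinal (ltnW j_lt)).
  by move=> /negbT n1 /negbT n2; apply/and3P; split; [exact: walk_edge | exact: n1 | exact: n2].
move/negP: cut_va; apply; rewrite (sym_connect_sym (del_vertex_sym v)).
by have := walk_connect k.-1; rewrite walk_flen_pred; apply; move: k_gt2; clear; lia.
Qed.

Lemma cut_flen_gt5 : (5 < k)%N.
Proof. by have [j /andP[j_gt2 j_lt] _] := walk_returns; move: j_gt2 j_lt; clear; lia. Qed.

Lemma cut_hexagon : deg e v = 4%N -> k = 6%N ->
  ~~ tri_across d0 && ~~ tri_across (fnext d0).
Proof.
move=> deg_v k6; have [j /andP[j_gt2 j_lt] wj] := walk_returns.
have {j_gt2 j_lt}j3 : j = 3%N by rewrite k6 in j_lt; move: j_gt2 j_lt; clear; lia.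
rewrite {j}j3 in wj.
have w5 : walk 5 = a by have := walk_flen_pred; rewrite k6.
have w6 : walk 6 = v by have := walk_flen; rewrite k6.
set b := rho v a; set c := walk 2; set g := walk 4.
have ebc : e b c := walk_edge 1.
have ecv : e c v by rewrite -wj walk_edge.
have evg : e v g by rewrite -wj walk_edge.
have ega : e g a by rewrite -w5 walk_edge.
have bv : b != v by rewrite eq_sym edge_neq ?rot_edge.
have av : a != v by rewrite edge_neq ?e_av.
have nac : ~~ connect (del_vertex e v) a c.
  apply: contra cut_va => ac; apply: connect_trans ac (connect1 _).
  by apply/and3P; split; rewrite 1?e_sym ?(edge_neq ecv).
have g_eq : g = rho v c by rewrite /g walk_rot wj.
have rvb : rho v b = c.
  have vc : fconnect (rho v) a c by apply: (rho_rot v).2; rewrite // e_sym.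
  have := findex_max vc; rewrite (order_rot e_va) deg_v.
  move/iter_findex: vc; case: (findex (rho v) a c) => [|[|[|[|m]]]] //= ac _.
  - by rewrite -ac connect0 in nac.
  - by rewrite -ac e_irr in ebc.
  - have := iter_rot4 e_va deg_v; rewrite /= -/b ac -g_eq => ga.
    by rewrite ga e_irr in ega.
have rvg : rho v g = a by rewrite g_eq -rvb; exact: (iter_rot4 e_va deg_v).
apply/andP; split; apply/negP; rewrite /tri_across /tri /= => /eqP t; have [_ t2] := tri_rot t.
  apply: (no_rot_cycle2 (x := a) (a := v) (b := g)) => //; first exact: e_av.
    by apply: (perm_inj (s := rho v)); rewrite t2 rvg.
  by rewrite -w6 walk_rot w5.
rewrite -/b rvb in t2.
by apply: (no_rot_cycle2 (x := b) (a := v) (b := c)); rewrite // e_sym rot_edge.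
Qed.

End CutVertex.

Lemma two_connected_of_euler_ge0 (x0 : T) : connected_graph e -> (0 <= euler_rot e rho)%R ->
  two_connected e.
Proof.
move=> conn eul_ge0; split; first exact: leq_trans (ltnW (deg_gt3 x0)) (max_card _).
move=> v x y xv yv; apply/idPn => nxy; suff : (euler_rot e rho < 0)%R by rewrite ltNge eul_ge0.
have [a e_va cut_va] := cut_vertex_split conn xv yv nxy.
apply: (euler_rot_lt0 (d := (a, v))); apply: final_charge_gt0_long (cut_flen_gt5 e_va cut_va) _.
have [k_gt6|] := boolP (6 < flen (a, v))%N; first by [].
rewrite -leqNgt => k_le6; apply/orP; right; apply: cut_hexagon => //; first exact: deg_eq4.
by apply/eqP; rewrite eqn_leq k_le6 (cut_flen_gt5 e_va cut_va).
Qed.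

End Configurations.

End RotationSystem.

Theorem theorem1p2 (T : finType) (e : rel T) :
  simple_graph e -> 0 < #|T| -> connected_graph e -> toroidal e ->
  ~ has_subgraph C1 e -> ~ has_subgraph C2 e ->
  (exists x : T, deg e x <= 3) \/
  (two_connected e /\ regular e 4 /\ euler_char_zero e).
Proof.
move=> [e_sym e_irr] T_gt0 conn [rho [rho_rot eul_ge0]] C1_free C2_free.
have [x0 _] := card_gt0P T_gt0.
have [/existsP[x deg_x]|/existsPn deg_le3] := boolP [exists x, deg e x <= 3].
  by left; exists x.
have deg_gt3 x : 3 < deg e x by rewrite ltnNge deg_le3.
right; split; [|split].
- exact: two_connected_of_euler_ge0 e_sym e_irr rho_rot deg_gt3 C1_free C2_free x0 conn eul_ge0.
- by move=> x; apply: deg_eq4 e_sym e_irr rho_rot deg_gt3 C1_free C2_free x eul_ge0.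
- split; first by exists rho.
  case=> rho' [rho'_rot eul2].
  by have := euler_rot_le0 e_sym e_irr rho'_rot deg_gt3 C1_free C2_free x0; rewrite eul2.
Qed.
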